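(* There exists a countable poset $P$ such that the space $\mathrm{UF}(P)$ is Hausdorff but not regular.
   Context: A filter on a poset $(P,\le_P)$ is an upward closed subset in which any two elements have a common lower bound in the set; it is unbounded if there is no $r\in P$ with $r<_P p$ for all $p$ in it ($r<_Pp$ meaning $r\le_Pp$ and not $p\le_Pr$). $\mathrm{UF}(P)$ is the set of unbounded filters on $P$ with topology generated by the sets $N_p=\{F:p\in F\}$, $p\in P$. *)

From Stdlib Require Import List.

Definition is_poset {P : Type} (le : P -> P -> Prop) : Prop :=
  (forall p, le p p) /\
  (forall p q, le p q -> le q p -> p = q) /\
  (forall p q r, le p q -> le q r -> le p r).

Definition countable_type (P : Type) : Prop :=
  exists f : P -> nat, forall x y, f x = f y -> x = y.

Definition ltP {P : Type} (le : P -> P -> Prop) (r p : P) : Prop :=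
  le r p /\ ~ le p r.

Definition is_filter {P : Type} (le : P -> P -> Prop) (F : P -> Prop) : Prop :=
  (forall p q, F p -> le p q -> F q) /\
  (forall p q, F p -> F q -> exists r, F r /\ le r p /\ le r q).

Definition unbounded {P : Type} (le : P -> P -> Prop) (F : P -> Prop) : Prop :=
  ~ (exists r, forall p, F p -> ltP le r p).

Definition UF {P : Type} (le : P -> P -> Prop) (F : P -> Prop) : Prop :=
  is_filter le F /\ unbounded le F.

(* Generic topology on the subset S of a type X generated by the subbase
   { B i | i : I } (each B i read as B i ∩ S): U is open iff every point of
   U ∩ S lies in a finite intersection of subbasic sets contained in U. *)
Definition subbase_open {X I : Type} (S : X -> Prop) (B : I -> X -> Prop)
    (U : X -> Prop) : Prop :=
  forall x, S x -> U x ->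
    exists s : list I,
      (forall i, In i s -> B i x) /\
      (forall y, S y -> (forall i, In i s -> B i y) -> U y).

(* Hausdorff, for a space with carrier S and open-set predicate opn.
   Points are compared extensionally (points here are subsets of P). *)
Definition hausdorff_on {X : Type} (S : X -> Prop) (eqv : X -> X -> Prop)
    (opn : (X -> Prop) -> Prop) : Prop :=
  forall x y, S x -> S y -> ~ eqv x y ->
    exists U V, opn U /\ opn V /\ U x /\ V y /\
      (forall z, S z -> U z -> V z -> False).

Definition closed_on {X : Type} (opn : (X -> Prop) -> Prop) (C : X -> Prop) : Prop :=
  opn (fun x => ~ C x).

Definition regular_on {X : Type} (S : X -> Prop)
    (opn : (X -> Prop) -> Prop) : Prop :=
  forall x C, S x -> closed_on opn C -> ~ C x ->
    exists U V, opn U /\ opn V /\ U x /\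
      (forall z, S z -> C z -> V z) /\
      (forall z, S z -> U z -> V z -> False).

Definition N_sub {P : Type} (p : P) : (P -> Prop) -> Prop := fun F => F p.

Definition UF_open {P : Type} (le : P -> P -> Prop) (U : (P -> Prop) -> Prop) : Prop :=
  subbase_open (UF le) (@N_sub P) U.

Definition set_eqv {P : Type} (F G : P -> Prop) : Prop := forall p, F p <-> G p.

From Stdlib Require Import List Lia Arith Classical Cantor.

(* The poset consists of atoms a(n,k), descending chains d(n,0) > d(n,1) > ...
   (one for each n) and one more descending chain e(0) > e(1) > ..., with
   a(n,k) <= d(n,j) iff j <= k and a(n,k) <= e(i) iff i <= n.  Its unbounded
   filters are the principal filters of the atoms and the chains D_n and E.
   Any two of them contain elements without common lower bound, which gives
   the Hausdorff property.  The D_n form a closed set missing E, but a basic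
   neighbourhood of E contains all up(a(N,k)) for N large, and a basic
   neighbourhood of D_N contains up(a(N,K)) for K large, so E and {D_n}
   cannot be separated. *)

Section UnboundedFilters.

Context {P : Type} (le : P -> P -> Prop).

Definition incompatible (p q : P) : Prop := forall r, le r p -> le r q -> False.

Definition minimal (m : P) : Prop := forall r, le r m -> r = m.

Lemma UF_open_N_sub (p : P) : UF_open le (N_sub p).
Proof.
  intros F _ Fp; exists (p :: nil); split.
  - intros i [<- | []]; exact Fp.
  - intros G _ HG; apply HG; left; reflexivity.
Qed.

Lemma UF_separate_incompatible (F G : P -> Prop) (p q : P) :
  F p -> G q -> incompatible p q ->
  exists U V, UF_open le U /\ UF_open le V /\ U F /\ V G /\
    (forall H, UF le H -> U H -> V H -> False).
Proof.
  intros Fp Gq Hpq; exists (N_sub p), (N_sub q).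
  repeat split; try apply UF_open_N_sub; try assumption.
  intros H [[_ Hdir] _] Hp Hq.
  destruct (Hdir p q Hp Hq) as [r [_ [Hrp Hrq]]]; exact (Hpq r Hrp Hrq).
Qed.

Lemma closed_on_UF (C : (P -> Prop) -> Prop) :
  (forall F, UF le F -> ~ C F -> exists p, F p /\ forall G, C G -> ~ G p) ->
  closed_on (UF_open le) C.
Proof.
  intros Hsep F HF HCF; destruct (Hsep F HF HCF) as [p [Fp Hp]].
  exists (p :: nil); split.
  - intros i [<- | []]; exact Fp.
  - intros G _ HG CG; exact (Hp G CG (HG p (or_introl eq_refl))).
Qed.

Lemma unbounded_inhabited (F : P -> Prop) (r : P) :
  unbounded le F -> exists p, F p.
Proof.
  intros Hunb; apply NNPP; intros Hempty; apply Hunb.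
  exists r; intros p Fp; exfalso; eauto.
Qed.

Hypothesis le_poset : is_poset le.

Lemma UF_up_minimal (m : P) : minimal m -> UF le (le m).
Proof.
  destruct le_poset as [le_refl [_ le_trans]]; intros Hm; split; [split|].
  - intros p q Hmp Hpq; exact (le_trans _ _ _ Hmp Hpq).
  - intros p q Hmp Hmq; exists m; auto.
  - intros [r Hr]; destruct (Hr m (le_refl m)) as [Hrm Hmr].
    rewrite (Hm r Hrm) in Hmr; exact (Hmr (le_refl m)).
Qed.

Lemma filter_minimal_up (F : P -> Prop) (m : P) :
  is_filter le F -> F m -> minimal m -> forall q, F q <-> le m q.
Proof.
  destruct le_poset as [_ [_ le_trans]]; intros [Hup Hdir] Fm Hm q; split.
  - intros Fq; destruct (Hdir m q Fm Fq) as [r [_ [Hrm Hrq]]].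
    rewrite (Hm r Hrm) in Hrq; exact Hrq.
  - exact (Hup m q Fm).
Qed.

Lemma unbounded_in_chain_full (F : P -> Prop) (c b : nat -> P) :
  (forall i j, i <= j -> le (c j) (c i)) ->
  (forall J i, i <= J -> ltP le (b J) (c i)) ->
  (forall p q, F p -> le p q -> F q) -> unbounded le F ->
  (forall p, F p -> exists i, p = c i) ->
  forall J, F (c J).
Proof.
  intros Hc Hb Hup Hunb Hsub J; apply NNPP; intros HJ; apply Hunb.
  exists (b J); intros p Fp; destruct (Hsub p Fp) as [i ->].
  apply Hb; destruct (le_lt_dec J i) as [HJi | HiJ]; [|lia].
  exfalso; exact (HJ (Hup _ _ Fp (Hc J i HJi))).
Qed.

End UnboundedFilters.

Inductive point := atom (n k : nat) | dpt (n j : nat) | ept (i : nat).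

Definition le_pt (x y : point) : Prop :=
  match x, y with
  | atom n k, atom n' k' => n = n' /\ k = k'
  | atom n k, dpt n' j => n = n' /\ j <= k
  | atom n _, ept i => i <= n
  | dpt n j, dpt n' j' => n = n' /\ j' <= j
  | ept i, ept i' => i' <= i
  | _, _ => False
  end.

Lemma le_pt_poset : is_poset le_pt.
Proof.
  split; [|split].
  - intros [n k | n j | i]; simpl; auto.
  - intros [n k | n j | i] [n' k' | n' j' | i']; simpl; intros H1 H2;
      try contradiction; f_equal; lia.
  - intros [n k | n j | i] [n' k' | n' j' | i'] [a b | a b | c]; simpl;
      intros H1 H2; try contradiction; lia.
Qed.

Definition encode (x : point) : nat :=
  match x with
  | atom n k => to_nat (0, to_nat (n, k))
  | dpt n j => to_nat (1, to_nat (n, j))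
  | ept i => to_nat (2, i)
  end.

Definition decode (m : nat) : point :=
  match of_nat m with
  | (0, c) => let (n, k) := of_nat c in atom n k
  | (1, c) => let (n, j) := of_nat c in dpt n j
  | (_, i) => ept i
  end.

Lemma decode_encode (x : point) : decode (encode x) = x.
Proof. destruct x; unfold decode, encode; rewrite !cancel_of_to; reflexivity. Qed.

Lemma point_countable : countable_type point.
Proof.
  exists encode; intros x y Hxy.
  rewrite <- (decode_encode x), <- (decode_encode y), Hxy; reflexivity.
Qed.

Lemma atom_minimal (n k : nat) : minimal le_pt (atom n k).
Proof.
  intros [a b | a b | a] H; simpl in H; try contradiction.
  destruct H; subst; reflexivity.
Qed.

Inductive ufilter := Principal (n k : nat) | Dchain (n : nat) | Echain.

Definition filter_of (u : ufilter) : point -> Prop :=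
  match u with
  | Principal n k => le_pt (atom n k)
  | Dchain n => fun q => exists j, q = dpt n j
  | Echain => fun q => exists i, q = ept i
  end.

Lemma UF_filter_of (u : ufilter) : UF le_pt (filter_of u).
Proof.
  destruct u as [n k | n |]; simpl.
  - exact (UF_up_minimal le_pt le_pt_poset _ (atom_minimal n k)).
  - split; [split|].
    + intros p [n' k' | n' j' | i] [j ->] H; simpl in H; try contradiction.
      destruct H as [<- _]; eexists; reflexivity.
    + intros p q [j ->] [j' ->]; exists (dpt n (max j j')).
      split; [eexists; reflexivity | simpl; lia].
    + intros [[a b | a b | a] Hr].
      * destruct (Hr (dpt n (S b))) as [H _]; [eexists; reflexivity | simpl in H; lia].
      * destruct (Hr (dpt n (S b))) as [H _]; [eexists; reflexivity | simpl in H; lia].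
      * destruct (Hr (dpt n 0)) as [H _]; [eexists; reflexivity | exact H].
  - split; [split|].
    + intros p [n' k' | n' j | i'] [i ->] H; simpl in H; try contradiction.
      eexists; reflexivity.
    + intros p q [i ->] [i' ->]; exists (ept (max i i')).
      split; [eexists; reflexivity | simpl; lia].
    + intros [[a b | a b | a] Hr].
      * destruct (Hr (ept (S a))) as [H _]; [eexists; reflexivity | simpl in H; lia].
      * destruct (Hr (ept 0)) as [H _]; [eexists; reflexivity | exact H].
      * destruct (Hr (ept (S a))) as [H _]; [eexists; reflexivity | simpl in H; lia].
Qed.

Lemma UF_classify (F : point -> Prop) :
  UF le_pt F -> exists u, set_eqv F (filter_of u).
Proof.
  intros [[Hup Hdir] Hunb].
  destruct (classic (exists n k, F (atom n k))) as [[n [k Fm]] | Hno_atom].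
  { exists (Principal n k).
    exact (filter_minimal_up le_pt le_pt_poset F _ (conj Hup Hdir) Fm (atom_minimal n k)). }
  (* Two members of [F] have a common lower bound in [F], which is not an
     atom, hence lies in the same chain as both of them. *)
  assert (Hbelow : forall p q, F p -> F q -> exists r, F r /\ le_pt r p /\ le_pt r q /\
            forall n k, r <> atom n k).
  { intros p q Fp Fq; destruct (Hdir p q Fp Fq) as [r [Fr Hr]].
    exists r; repeat split; try tauto; intros n k ->; eauto. }
  destruct (unbounded_inhabited le_pt F (ept 0) Hunb) as [[n k | n j0 | i0] F0].
  - exfalso; eauto.
  - exists (Dchain n).
    assert (Hsub : forall q, F q -> exists j, q = dpt n j).
    { intros q Fq; destruct (Hbelow _ _ F0 Fq) as [[a b | a b | a] [_ [Hr0 [Hrq Hr]]]];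
        simpl in Hr0; try contradiction.
      - exfalso; exact (Hr a b eq_refl).
      - destruct Hr0 as [<- _], q as [c d | c d | c]; simpl in Hrq; try contradiction.
        destruct Hrq as [<- _]; eexists; reflexivity. }
    intros q; split; [apply Hsub|].
    intros [j ->]; apply (unbounded_in_chain_full le_pt F (dpt n) (atom n)); try assumption.
    + intros i j' H; simpl; split; [reflexivity | exact H].
    + intros J i H; simpl; split; [split; [reflexivity | exact H] | tauto].
  - exists Echain.
    assert (Hsub : forall q, F q -> exists i, q = ept i).
    { intros q Fq; destruct (Hbelow _ _ F0 Fq) as [[a b | a b | a] [_ [Hr0 [Hrq Hr]]]];
        simpl in Hr0; try contradiction.
      - exfalso; exact (Hr a b eq_refl).
      - destruct q as [c d | c d | c]; simpl in Hrq; try contradiction.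
        eexists; reflexivity. }
    intros q; split; [apply Hsub|].
    intros [i ->]; apply (unbounded_in_chain_full le_pt F ept (fun J => atom J 0)); try assumption.
    + intros i' j' H; exact H.
    + intros J i' H; simpl; split; [exact H | tauto].
Qed.

(* The member of [filter_of u] used to separate it from [filter_of v]. *)
Definition witness (u v : ufilter) : point :=
  match u, v with
  | Principal n k, _ => atom n k
  | Dchain n, Principal _ k => dpt n (S k)
  | Dchain n, _ => dpt n 0
  | Echain, Principal n _ | Echain, Dchain n => ept (S n)
  | Echain, Echain => ept 0
  end.

Lemma witness_mem (u v : ufilter) : filter_of u (witness u v).
Proof. destruct u, v; simpl; eauto. Qed.

Lemma witness_incompatible (u v : ufilter) :
  u <> v -> incompatible le_pt (witness u v) (witness v u).
Proof.
  intros Huv [a b | a b | a]; destruct u, v; simpl; intros H1 H2;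
    try contradiction; try lia.
  all: destruct H1 as [<- ?], H2 as [<- ?]; subst; exact (Huv eq_refl).
Qed.

Lemma UF_hausdorff : hausdorff_on (UF le_pt) (@set_eqv point) (UF_open le_pt).
Proof.
  intros F G HF HG HFG.
  destruct (UF_classify F HF) as [u Hu], (UF_classify G HG) as [v Hv].
  assert (Huv : u <> v).
  { intros <-; apply HFG; intros p; rewrite (Hu p), (Hv p); reflexivity. }
  apply (UF_separate_incompatible le_pt F G (witness u v) (witness v u)).
  - apply Hu, witness_mem.
  - apply Hv, witness_mem.
  - exact (witness_incompatible u v Huv).
Qed.

Definition index (x : point) : nat :=
  match x with atom _ _ => 0 | dpt _ j => j | ept i => i end.

Lemma index_le_list_max (s : list point) (x : point) :
  In x s -> index x <= list_max (map index s).
Proof.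
  induction s as [| y s IH]; simpl; [contradiction |].
  intros [<- | Hx]; [lia | specialize (IH Hx); lia].
Qed.

Lemma Echain_neighbourhood (U : (point -> Prop) -> Prop) :
  UF_open le_pt U -> U (filter_of Echain) ->
  exists N, forall k, U (filter_of (Principal N k)).
Proof.
  intros HU HE; destruct (HU _ (UF_filter_of Echain) HE) as [s [Hs HsU]].
  exists (list_max (map index s)); intros k.
  apply HsU; [apply UF_filter_of |]; intros p Hp.
  destruct (Hs p Hp) as [i ->]; exact (index_le_list_max s (ept i) Hp).
Qed.

Lemma Dchain_neighbourhood (V : (point -> Prop) -> Prop) (N : nat) :
  UF_open le_pt V -> V (filter_of (Dchain N)) ->
  exists K, V (filter_of (Principal N K)).
Proof.
  intros HV HD; destruct (HV _ (UF_filter_of (Dchain N)) HD) as [s [Hs HsV]].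
  exists (list_max (map index s)).
  apply HsV; [apply UF_filter_of |]; intros p Hp.
  destruct (Hs p Hp) as [j ->]; split; [reflexivity | exact (index_le_list_max s (dpt N j) Hp)].
Qed.

Definition Dchain_filters (F : point -> Prop) : Prop :=
  exists n, set_eqv F (filter_of (Dchain n)).

Lemma Dchain_filters_closed : closed_on (UF_open le_pt) Dchain_filters.
Proof.
  apply closed_on_UF; intros F HF HCF.
  assert (Havoid : forall p G, Dchain_filters G -> G p -> exists n j, p = dpt n j).
  { intros p G [n Hn] Gp; destruct (proj1 (Hn p) Gp) as [j ->]; eauto. }
  destruct (UF_classify F HF) as [[n k | n |] Hu].
  - exists (atom n k); split; [apply Hu; simpl; auto |].
    intros G CG Gp; destruct (Havoid _ G CG Gp) as [? [? ?]]; discriminate.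
  - exfalso; apply HCF; exists n; exact Hu.
  - exists (ept 0); split; [apply Hu; simpl; eauto |].
    intros G CG Gp; destruct (Havoid _ G CG Gp) as [? [? ?]]; discriminate.
Qed.

Lemma UF_not_regular : ~ regular_on (UF le_pt) (UF_open le_pt).
Proof.
  intros Hreg.
  assert (HE : ~ Dchain_filters (filter_of Echain)).
  { intros [m Hm]; destruct (proj1 (Hm (ept 0)) (ex_intro _ 0 eq_refl)); discriminate. }
  destruct (Hreg _ _ (UF_filter_of Echain) Dchain_filters_closed HE)
    as [U [V [HU [HV [UE [CV Hdisj]]]]]].
  destruct (Echain_neighbourhood U HU UE) as [N HN].
  assert (VD : V (filter_of (Dchain N))).
  { apply CV; [apply UF_filter_of | exists N; intros p; reflexivity]. }
  destruct (Dchain_neighbourhood V N HV VD) as [K HK].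
  exact (Hdisj _ (UF_filter_of (Principal N K)) (HN K) HK).
Qed.

Theorem corollary2p19 :
  exists (P : Type) (le : P -> P -> Prop),
    is_poset le /\ countable_type P /\
    hausdorff_on (UF le) (@set_eqv P) (UF_open le) /\
    ~ regular_on (UF le) (UF_open le).
Proof.
  exists point, le_pt.
  split; [exact le_pt_poset |].
  split; [exact point_countable |].
  split; [exact UF_hausdorff | exact UF_not_regular].
Qed.
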